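(* Let $M\in\mathbb{N}$ be divisible neither by $2^4$ nor by the square of any odd prime, let $k$ be a positive integer, and suppose $d=\dim S_k^{\rm new}(\Gamma_0(M))\ge2$. Let $\varphi_1,\ldots,\varphi_d$ be the normalized newforms forming a basis of $S_k^{\rm new}(\Gamma_0(M))$, with Fourier coefficients $a_i(n)$, and for primes $p\nmid M$ define $\theta_i(p)\in[0,\tfrac12]$ by $a_i(p)=2p^{\frac{k-1}{2}}\cos(2\pi\theta_i(p))$. Let $p\nmid M$ be a prime such that for every pair of indices $i\ne j$ the numbers $1,\theta_i(p),\theta_j(p)$ are linearly independent over $\mathbb{Q}$. Then for any index $i_1\in\{1,\ldots,d\}$ there exist distinct non-zero integers $n_1,\ldots,n_d$ such that (1) $n_{i_1}\nmid n_i$ for all $i\ne i_1$; (2) for every $t\in\mathbb{R}$ and every $\varepsilon>0$ there exists $n\in\mathbb{N}$ such that $\min\{|n\theta_i(p)-n_it-m|:m\in\mathbb{Z}\}<\varepsilon$ for all $i=1,\ldots,d$.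
   Context: $S_k^{\rm new}(\Gamma_0(M))$ is the new subspace of weight-$k$ holomorphic cusp forms for $\Gamma_0(M)$ with trivial character; normalized newforms have real coefficients with $|a_i(p)|\le 2p^{(k-1)/2}$. The assumption $d\ge 2$ is a standing assumption of the section of the paper containing this lemma. *)

From Stdlib Require Export Reals Lra ZArith QArith Qreals Znumtheory.
Open Scope R_scope.

Definition nat_prime (q : nat) : Prop := prime (Z.of_nat q).

Definition level_ok (M : nat) : Prop :=
  (0 < M)%nat /\ ~ Nat.divide 16 M /\
  (forall q : nat, nat_prime q -> q <> 2%nat -> ~ Nat.divide (q * q) M).

Definition Q_lin_indep3 (x y z : R) : Prop :=
  forall q0 q1 q2 : Q, Q2R q0 * x + Q2R q1 * y + Q2R q2 * z = 0 ->
    (q0 == 0)%Q /\ (q1 == 0)%Q /\ (q2 == 0)%Q.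

Definition satake_angles (M k d : nat) (a : nat -> nat -> R) (theta : nat -> nat -> R) : Prop :=
  forall i q : nat, (i < d)%nat -> nat_prime q -> ~ Nat.divide q M ->
    0 <= theta i q <= 1/2 /\
    a i q = 2 * Rpower (INR q) ((INR k - 1) / 2) * cos (2 * PI * theta i q).

(* Only the pairwise Q-independence of 1, theta_i(p), theta_j(p) is used; the modular-form
   hypotheses just produce the angles.  Write th_i = theta_i(p).  If an integer vector n is
   orthogonal to every integer relation h (i.e. h.th rational), Kronecker's theorem makes the orbit
   N th - t n come arbitrarily close to Z^d, for every t.  Rational linear algebra (the annihilator
   of the span of the relations) yields such n with h.n <> 0 for any finitely many non-relations h.
   Avoiding e_i and e_i - e_j gives u with distinct nonzero entries; avoiding
   u_(i1) e_i - u_i e_(i1) gives v; then n = N u + v with N large has distinct nonzero entries,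
   and n_(i1) cannot divide n_i, since it divides the nonzero but smaller number
   u_(i1) n_i - u_i n_(i1) = u_(i1) v_i - u_i v_(i1). *)

From Stdlib Require Import Reals ZArith QArith Qreals List Lia Lra Classical.
From mathcomp Require ssreflect ssrfun ssrbool eqtype ssrnat seq fintype bigop.
From mathcomp Require ssralg ssrnum ssrint rat matrix mxalgebra Rstruct ssrZ zify.
Open Scope R_scope.

Definition is_rational (x : R) : Prop := exists q : Q, x = Q2R q.

Lemma is_rational_0 : is_rational 0.
Proof. exists 0%Q. unfold Q2R. simpl. lra. Qed.

Lemma is_rational_plus x y : is_rational x -> is_rational y -> is_rational (x + y).
Proof. intros [a ->] [b ->]. exists (a + b)%Q. now rewrite Q2R_plus. Qed.

Lemma is_rational_mult x y : is_rational x -> is_rational y -> is_rational (x * y).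
Proof. intros [a ->] [b ->]. exists (a * b)%Q. now rewrite Q2R_mult. Qed.

Fixpoint dotR (d : nat) (h : nat -> Z) (x : nat -> R) : R :=
  match d with O => 0 | S d' => dotR d' h x + IZR (h d') * x d' end.

Fixpoint dotZ (d : nat) (h n : nat -> Z) : Z :=
  match d with O => 0%Z | S d' => (dotZ d' h n + h d' * n d')%Z end.

Definition unit_vec (i : nat) : nat -> Z := fun l => if Nat.eqb l i then 1%Z else 0%Z.

Definition pair_vec (i j : nat) (a b : Z) : nat -> Z :=
  fun l => (a * unit_vec i l + b * unit_vec j l)%Z.

Lemma dotR_ext d h g x y :
  (forall l, (l < d)%nat -> h l = g l) -> (forall l, (l < d)%nat -> x l = y l) ->
  dotR d h x = dotR d g y.
Proof.
induction d; intros Hh Hx; simpl; auto.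
rewrite IHd, Hh, Hx by auto. reflexivity.
Qed.

Lemma dotR_addl d h g x : dotR d (fun l => (h l + g l)%Z) x = dotR d h x + dotR d g x.
Proof. induction d; simpl; [lra | rewrite IHd, plus_IZR; ring]. Qed.

Lemma dotR_subl d h g x : dotR d (fun l => (h l - g l)%Z) x = dotR d h x - dotR d g x.
Proof. induction d; simpl; [lra | rewrite IHd, minus_IZR; ring]. Qed.

Lemma dotR_scall d a h x : dotR d (fun l => (a * h l)%Z) x = IZR a * dotR d h x.
Proof. induction d; simpl; [ring | rewrite IHd, mult_IZR; ring]. Qed.

Lemma dotR_linear_r d h x y a b :
  dotR d h (fun l => a * x l + b * y l) = a * dotR d h x + b * dotR d h y.
Proof. induction d; simpl; [lra | rewrite IHd; ring]. Qed.

Lemma dotR_IZR d h n : dotR d h (fun l => IZR (n l)) = IZR (dotZ d h n).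
Proof. induction d; simpl; auto. rewrite IHd, plus_IZR, mult_IZR. ring. Qed.

Lemma dotR_null d h x : (forall l, (l < d)%nat -> h l = 0%Z) -> dotR d h x = 0.
Proof.
induction d; intros H; simpl; auto.
rewrite IHd, H by auto. simpl. ring.
Qed.

Lemma dotR_supported d i h x :
  (i < d)%nat -> (forall l, l <> i -> h l = 0%Z) -> dotR d h x = IZR (h i) * x i.
Proof.
induction d; intros Hi H; [lia|]. simpl.
destruct (Nat.eq_dec i d) as [->|Hne].
- rewrite dotR_null by (intros l Hl; apply H; lia). ring.
- rewrite IHd, (H d) by (auto; lia). simpl. ring.
Qed.

Lemma dotR_unit_vec d i x : (i < d)%nat -> dotR d (unit_vec i) x = x i.
Proof.
intros Hi. rewrite (dotR_supported d i) by
  (auto; intros l Hl; unfold unit_vec; now rewrite (proj2 (Nat.eqb_neq l i))).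
unfold unit_vec. rewrite Nat.eqb_refl. ring.
Qed.

Lemma dotR_pair_vec d i j a b x : (i < d)%nat -> (j < d)%nat ->
  dotR d (pair_vec i j a b) x = IZR a * x i + IZR b * x j.
Proof.
intros Hi Hj. unfold pair_vec.
rewrite dotR_addl, !dotR_scall, !dotR_unit_vec by auto. reflexivity.
Qed.

Lemma dotZ_linear_r d h u v a b :
  dotZ d h (fun l => (a * u l + b * v l)%Z) = (a * dotZ d h u + b * dotZ d h v)%Z.
Proof. induction d; simpl; [lia | rewrite IHd; ring]. Qed.

Lemma dotZ_unit_vec d i n : (i < d)%nat -> dotZ d (unit_vec i) n = n i.
Proof. intros Hi. apply eq_IZR. now rewrite <- dotR_IZR, dotR_unit_vec. Qed.

Lemma dotZ_pair_vec d i j a b n : (i < d)%nat -> (j < d)%nat ->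
  dotZ d (pair_vec i j a b) n = (a * n i + b * n j)%Z.
Proof.
intros Hi Hj. apply eq_IZR.
rewrite <- dotR_IZR, dotR_pair_vec, plus_IZR, !mult_IZR by auto. reflexivity.
Qed.

Fixpoint is_null (d : nat) (h : nat -> Z) : bool :=
  match d with O => true | S d' => is_null d' h && Z.eqb (h d') 0 end.

Lemma is_null_spec d h : is_null d h = true <-> forall l, (l < d)%nat -> h l = 0%Z.
Proof.
induction d; simpl; [split; auto; intros; lia|].
rewrite andb_true_iff, IHd, Z.eqb_eq. split.
- intros [H1 H2] l Hl. destruct (Nat.eq_dec l d); [subst; auto | apply H1; lia].
- intros H. split; [intros; apply H|apply H]; lia.
Qed.

Fixpoint sumR (N : nat) (f : nat -> R) : R :=
  match N with O => 0 | S N' => sumR N' f + f N' end.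

Lemma sumR_add N f g : sumR N (fun j => f j + g j) = sumR N f + sumR N g.
Proof. induction N; simpl; [lra | rewrite IHN; lra]. Qed.

Lemma sumR_const N a : sumR N (fun _ => a) = INR N * a.
Proof. induction N; simpl sumR; [simpl; lra | rewrite IHN, S_INR; lra]. Qed.

Lemma sumR_scal N a f : sumR N (fun j => a * f j) = a * sumR N f.
Proof. induction N; simpl; [lra | rewrite IHN; lra]. Qed.

Lemma sumR_ext N f g : (forall j, (j < N)%nat -> f j = g j) -> sumR N f = sumR N g.
Proof. induction N; intros H; simpl; auto. rewrite IHN, H by auto. reflexivity. Qed.

Lemma sumR_le N f g : (forall j, (j < N)%nat -> f j <= g j) -> sumR N f <= sumR N g.
Proof.
induction N; intros H; simpl; [lra|].
apply Rplus_le_compat; [apply IHN; auto | apply H; lia].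
Qed.

Lemma sumR_ge_head N f : (forall j, 0 <= f j) -> f O <= sumR (S N) f.
Proof.
induction N; intros H; simpl in *; [lra|].
specialize (IHN H). specialize (H (S N)). lra.
Qed.

Lemma pow_le_1 x M : 0 <= x <= 1 -> x ^ M <= 1.
Proof. intros Hx. induction M; simpl; [lra|]. pose proof (pow_le x M). nra. Qed.

Lemma cos_add_2PI_IZR x k : cos (x + 2 * PI * IZR k) = cos x.
Proof.
assert (Hn : forall y n, cos (y + 2 * PI * IZR (Z.of_nat n)) = cos y).
{ intros y n. rewrite <- INR_IZR_INZ, <- (cos_period y n). f_equal. ring. }
destruct (Z.le_ge_cases 0 k) as [Hk|Hk].
- destruct (Z_of_nat_complete k Hk) as [n ->]. apply Hn.
- destruct (Z_of_nat_complete (- k) ltac:(lia)) as [n Hk'].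
  rewrite <- (Hn _ n), <- Hk', opp_IZR. f_equal. ring.
Qed.

Lemma sin_add_2PI_IZR x k : sin (x + 2 * PI * IZR k) = sin x.
Proof.
assert (Hn : forall y n, sin (y + 2 * PI * IZR (Z.of_nat n)) = sin y).
{ intros y n. rewrite <- INR_IZR_INZ, <- (sin_period y n). f_equal. ring. }
destruct (Z.le_ge_cases 0 k) as [Hk|Hk].
- destruct (Z_of_nat_complete k Hk) as [n ->]. apply Hn.
- destruct (Z_of_nat_complete (- k) ltac:(lia)) as [n Hk'].
  rewrite <- (Hn _ n), <- Hk', opp_IZR. f_equal. ring.
Qed.

Lemma sin_PI_mul_eq_0 x : sin (PI * x) = 0 -> exists m : Z, x = IZR m.
Proof.
intros H. apply sin_eq_0_0 in H as [m Hm]. exists m.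
apply (Rmult_eq_reg_l PI); [rewrite Hm; ring | apply PI_neq0].
Qed.

Lemma sum_cos_telescope N g p :
  2 * sin (g / 2) * sumR N (fun j => cos (INR j * g + p)) =
  sin ((INR N - 1/2) * g + p) - sin (p - g / 2).
Proof.
induction N.
- simpl. replace ((0 - 1/2) * g + p) with (p - g/2) by lra. lra.
- simpl sumR. rewrite Rmult_plus_distr_l, IHN, S_INR.
  replace ((INR N + 1 - 1/2) * g + p) with ((INR N * g + p) + g/2) by lra.
  replace ((INR N - 1/2) * g + p) with ((INR N * g + p) - g/2) by lra.
  rewrite sin_plus, sin_minus. ring.
Qed.

Lemma sum_cos_bound N g p : sin (g / 2) <> 0 ->
  Rabs (sumR N (fun j => cos (INR j * g + p))) <= 1 / Rabs (sin (g / 2)).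
Proof.
intros Hs. set (S := sumR N _).
assert (Ha : 0 < Rabs (sin (g / 2))) by (apply Rabs_pos_lt; auto).
assert (H2 : Rabs (2 * sin (g / 2) * S) <= 2).
{ unfold S. rewrite sum_cos_telescope. apply Rabs_le.
  pose proof (SIN_bound ((INR N - 1/2) * g + p)). pose proof (SIN_bound (p - g/2)). lra. }
rewrite !Rabs_mult, (Rabs_right 2) in H2 by lra.
apply (Rmult_le_reg_l (Rabs (sin (g / 2)))); auto.
field_simplify; lra.
Qed.

Lemma sum_cos_roots_of_unity k Q : k <> 0%Z -> (Z.abs k < Z.of_nat Q)%Z ->
  sumR Q (fun r => cos (2 * PI * (IZR k * (INR r / INR Q)))) = 0.
Proof.
intros Hk HQ.
assert (HQ0 : 0 < INR Q) by (apply lt_0_INR; lia).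
set (g := 2 * PI * IZR k / INR Q).
rewrite (sumR_ext Q _ (fun r => cos (INR r * g + 0))).
2:{ intros j _. f_equal. unfold g. field. lra. }
assert (Hs : sin (g / 2) <> 0).
{ intros Hs. replace (g / 2) with (PI * (IZR k / INR Q)) in Hs by (unfold g; field; lra).
  apply sin_PI_mul_eq_0 in Hs as [m Hm].
  assert (E : k = (m * Z.of_nat Q)%Z).
  { apply eq_IZR. rewrite mult_IZR, <- INR_IZR_INZ, <- Hm. field. lra. }
  subst k. rewrite Z.abs_mul, (Z.abs_eq (Z.of_nat Q)) in HQ by lia.
  destruct (Z.eq_dec m 0); [subst; lia | nia]. }
pose proof (sum_cos_telescope Q g 0) as E.
replace ((INR Q - 1/2) * g + 0) with (0 - g/2 + 2 * PI * IZR k) in E by (unfold g; field; lra).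
rewrite sin_add_2PI_IZR, Rminus_diag in E.
apply Rmult_integral in E as [E|E]; [lra | exact E].
Qed.

(* A cosine polynomial [sum c cos(2 pi h.u)] is a list of (coefficient, frequency) pairs. *)
Definition cterm := (R * (nat -> Z))%type.
Definition cpoly := list cterm.

Definition cterm_eval (d : nat) (u : nat -> R) (t : cterm) : R :=
  fst t * cos (2 * PI * dotR d (snd t) u).

Fixpoint cpoly_eval (d : nat) (u : nat -> R) (P : cpoly) : R :=
  match P with nil => 0 | t :: P' => cterm_eval d u t + cpoly_eval d u P' end.

Definition cterm_const (d : nat) (t : cterm) : R := if is_null d (snd t) then fst t else 0.

Fixpoint const_coef (d : nat) (P : cpoly) : R :=
  match P with nil => 0 | t :: P' => cterm_const d t + const_coef d P' end.

Definition nonneg_coefs (P : cpoly) : Prop := Forall (fun t : cterm => 0 <= fst t) P.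

(* [cos a cos b = (cos (a + b) + cos (a - b)) / 2] *)
Definition cterm_mul (t s : cterm) : cpoly :=
  (fst t * fst s / 2, fun l => (snd t l + snd s l)%Z) ::
  (fst t * fst s / 2, fun l => (snd t l - snd s l)%Z) :: nil.

Definition cpoly_mul (P Q : cpoly) : cpoly := flat_map (fun t => flat_map (cterm_mul t) Q) P.

Lemma cpoly_eval_app d u P Q : cpoly_eval d u (P ++ Q) = cpoly_eval d u P + cpoly_eval d u Q.
Proof. induction P; simpl; [lra | rewrite IHP; lra]. Qed.

Lemma const_coef_app d P Q : const_coef d (P ++ Q) = const_coef d P + const_coef d Q.
Proof. induction P; simpl; [lra | rewrite IHP; lra]. Qed.

Lemma cpoly_eval_cterm_mul d u t s :
  cpoly_eval d u (cterm_mul t s) = cterm_eval d u t * cterm_eval d u s.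
Proof.
unfold cterm_mul; cbn [cpoly_eval]; unfold cterm_eval; cbn [fst snd].
rewrite dotR_addl, dotR_subl.
set (A := 2 * PI * dotR d (snd t) u). set (B := 2 * PI * dotR d (snd s) u).
replace (2 * PI * (dotR d (snd t) u + dotR d (snd s) u)) with (A + B) by (unfold A, B; ring).
replace (2 * PI * (dotR d (snd t) u - dotR d (snd s) u)) with (A - B) by (unfold A, B; ring).
rewrite cos_plus, cos_minus. field.
Qed.

Lemma cpoly_eval_mul_cterm d u t Q :
  cpoly_eval d u (flat_map (cterm_mul t) Q) = cterm_eval d u t * cpoly_eval d u Q.
Proof.
induction Q as [|s Q IH]; [simpl; ring|]. cbn [flat_map].
rewrite cpoly_eval_app, cpoly_eval_cterm_mul, IH. cbn [cpoly_eval]. ring.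
Qed.

Lemma cpoly_eval_mul d u P Q : cpoly_eval d u (cpoly_mul P Q) = cpoly_eval d u P * cpoly_eval d u Q.
Proof.
induction P as [|t P IH]; [simpl; ring|]. unfold cpoly_mul in *. cbn [flat_map].
rewrite cpoly_eval_app, cpoly_eval_mul_cterm, IH. cbn [cpoly_eval]. ring.
Qed.

Lemma nonneg_coefs_mul P Q : nonneg_coefs P -> nonneg_coefs Q -> nonneg_coefs (cpoly_mul P Q).
Proof.
intros HP HQ. unfold nonneg_coefs, cpoly_mul in *.
apply Forall_flat_map. eapply Forall_impl; [|exact HP]. intros t Ht.
apply Forall_flat_map. eapply Forall_impl; [|exact HQ]. intros s Hs.
assert (0 <= fst t * fst s / 2) by (unfold Rdiv; repeat apply Rmult_le_pos; lra).
unfold cterm_mul. constructor; [exact H|]. constructor; [exact H|]. constructor.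
Qed.

Lemma const_coef_cterm_mul d t s : 0 <= fst t -> 0 <= fst s ->
  cterm_const d t * cterm_const d s <= const_coef d (cterm_mul t s).
Proof.
intros Ht Hs. unfold cterm_mul; cbn [const_coef]. unfold cterm_const; cbn [fst snd].
assert (0 <= fst t * fst s / 2) by (unfold Rdiv; repeat apply Rmult_le_pos; lra).
destruct (is_null d (snd t)) eqn:E1; destruct (is_null d (snd s)) eqn:E2;
  try (repeat match goal with |- context [if ?b then _ else _] => destruct b end; nra).
rewrite is_null_spec in E1, E2.
rewrite !(proj2 (is_null_spec _ _)) by (intros l Hl; rewrite E1, E2 by auto; reflexivity).
lra.
Qed.

(* The products of terms with nonzero frequency only contribute nonnegative coefficients. *)
Lemma const_coef_mul d P Q : nonneg_coefs P -> nonneg_coefs Q ->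
  const_coef d P * const_coef d Q <= const_coef d (cpoly_mul P Q).
Proof.
intros HP HQ; induction HP as [|t P Ht HP IH]; [simpl; lra|].
unfold cpoly_mul in *. cbn [flat_map const_coef]. rewrite const_coef_app.
enough (cterm_const d t * const_coef d Q <= const_coef d (flat_map (cterm_mul t) Q)) by lra.
clear IH. induction HQ as [|s Q Hs HQ IHQ]; [simpl; lra|].
cbn [flat_map const_coef]. rewrite const_coef_app.
pose proof (const_coef_cterm_mul d t s Ht Hs). lra.
Qed.

(* [peak v = cos (PI v) ^ 2]: it equals [1] exactly at the integers. *)
Definition peak (v : R) : R := (1 + cos (2 * PI * v)) / 2.

Definition cpoly_one : cpoly := (1, fun _ => 0%Z) :: nil.

Definition peak_cpoly (i : nat) : cpoly := (1/2, fun _ => 0%Z) :: (1/2, unit_vec i) :: nil.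

Fixpoint peak_pow_cpoly (i M : nat) : cpoly :=
  match M with O => cpoly_one | S M' => cpoly_mul (peak_cpoly i) (peak_pow_cpoly i M') end.

Fixpoint kernel (M k : nat) : cpoly :=
  match k with O => cpoly_one | S k' => cpoly_mul (peak_pow_cpoly k' M) (kernel M k') end.

Fixpoint peak_prod (M k : nat) (u : nat -> R) : R :=
  match k with O => 1 | S k' => peak (u k') ^ M * peak_prod M k' u end.

Lemma cpoly_eval_one d u : cpoly_eval d u cpoly_one = 1.
Proof.
unfold cpoly_one; cbn [cpoly_eval]. unfold cterm_eval; cbn [fst snd].
rewrite dotR_null, Rmult_0_r, cos_0 by reflexivity. ring.
Qed.

Lemma cpoly_eval_peak_pow d u i M : (i < d)%nat ->
  cpoly_eval d u (peak_pow_cpoly i M) = peak (u i) ^ M.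
Proof.
intros Hi. induction M; cbn [peak_pow_cpoly pow]; [apply cpoly_eval_one|].
rewrite cpoly_eval_mul, IHM. f_equal.
unfold peak_cpoly; cbn [cpoly_eval]. unfold cterm_eval, peak; cbn [fst snd].
rewrite dotR_null, dotR_unit_vec, Rmult_0_r, cos_0 by auto. field.
Qed.

Lemma cpoly_eval_kernel d u M k : (k <= d)%nat -> cpoly_eval d u (kernel M k) = peak_prod M k u.
Proof.
intros Hk. induction k; cbn [kernel peak_prod]; [apply cpoly_eval_one|].
rewrite cpoly_eval_mul, cpoly_eval_peak_pow, IHk by lia. reflexivity.
Qed.

Lemma nonneg_coefs_one : nonneg_coefs cpoly_one.
Proof. repeat constructor; simpl; lra. Qed.

Lemma nonneg_coefs_peak_pow i M : nonneg_coefs (peak_pow_cpoly i M).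
Proof.
induction M; cbn [peak_pow_cpoly]; [apply nonneg_coefs_one|].
apply nonneg_coefs_mul; auto. repeat constructor; simpl; lra.
Qed.

Lemma nonneg_coefs_kernel M k : nonneg_coefs (kernel M k).
Proof.
induction k; cbn [kernel]; [apply nonneg_coefs_one|].
apply nonneg_coefs_mul; auto. apply nonneg_coefs_peak_pow.
Qed.

Lemma peak_bounds v : 0 <= peak v <= 1.
Proof. unfold peak. pose proof (COS_bound (2 * PI * v)). lra. Qed.

Lemma peak_pow_bounds v M : 0 <= peak v ^ M <= 1.
Proof.
pose proof (peak_bounds v). split; [apply pow_le | apply pow_le_1]; lra.
Qed.

Lemma peak_prod_bounds M k u : 0 <= peak_prod M k u <= 1.
Proof.
induction k; simpl; [lra|]. pose proof (peak_pow_bounds (u k) M).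
split; [apply Rmult_le_pos|]; nra.
Qed.

Lemma peak_prod_le M k u i rho : (i < k)%nat -> 0 <= rho -> peak (u i) <= rho ->
  peak_prod M k u <= rho ^ M.
Proof.
intros Hi Hr Hpeak. induction k; [lia|]. simpl.
pose proof (peak_prod_bounds M k u). pose proof (peak_pow_bounds (u k) M).
assert (0 <= rho ^ M) by (apply pow_le; lra).
destruct (Nat.eq_dec i k) as [->|Hne].
- assert (peak (u k) ^ M <= rho ^ M) by (apply pow_incr; pose proof (peak_bounds (u k)); lra). nra.
- assert (peak_prod M k u <= rho ^ M) by (apply IHk; lia). nra.
Qed.

Definition supported_on (i M : nat) (t : cterm) : Prop :=
  (forall l, l <> i -> snd t l = 0%Z) /\ (Z.abs (snd t i) <= Z.of_nat M)%Z.

Lemma supported_on_mul i a b P Q : Forall (supported_on i a) P -> Forall (supported_on i b) Q ->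
  Forall (supported_on i (a + b)) (cpoly_mul P Q).
Proof.
intros HP HQ. apply Forall_flat_map. eapply Forall_impl; [|exact HP]. intros t [Ht1 Ht2].
apply Forall_flat_map. eapply Forall_impl; [|exact HQ]. intros s [Hs1 Hs2].
unfold cterm_mul. repeat constructor; cbn; try lia;
  intros l Hl; rewrite Ht1, Hs1 by auto; reflexivity.
Qed.

Lemma supported_on_peak_pow i M : Forall (supported_on i M) (peak_pow_cpoly i M).
Proof.
induction M; cbn [peak_pow_cpoly].
- repeat constructor; cbn; lia.
- replace (S M) with (1 + M)%nat by lia. apply supported_on_mul; auto.
  unfold peak_cpoly, unit_vec. repeat constructor; cbn; try lia.
  + intros l Hl. now rewrite (proj2 (Nat.eqb_neq l i)).
  + rewrite Nat.eqb_refl. lia.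
Qed.

(* Averaging over the grid [r / Q] (r < Q) along the i-th axis kills every frequency
   [0 < |h_i| < Q]. *)
Definition grid_point (i Q r : nat) : nat -> R := fun l => if Nat.eqb l i then INR r / INR Q else 0.

Lemma grid_sum_cterm d i M t : supported_on i M t -> (i < d)%nat ->
  sumR (S M) (fun r => cterm_eval d (grid_point i (S M) r) t) = INR (S M) * cterm_const d t.
Proof.
intros [Ht1 Ht2] Hi. unfold cterm_eval, cterm_const.
rewrite (sumR_ext (S M) _ (fun r => fst t * cos (2 * PI * (IZR (snd t i) * (INR r / INR (S M)))))).
2:{ intros r _. rewrite (dotR_supported d i) by auto. unfold grid_point. now rewrite Nat.eqb_refl. }
rewrite sumR_scal. destruct (Z.eq_dec (snd t i) 0) as [E|E].
- rewrite (proj2 (is_null_spec _ _)).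
  2:{ intros l _. destruct (Nat.eq_dec l i) as [->|]; auto. }
  rewrite E, (sumR_ext _ _ (fun _ => 1)), sumR_const; [ring|].
  intros r _. now rewrite Rmult_0_l, Rmult_0_r, cos_0.
- rewrite sum_cos_roots_of_unity by (auto; lia).
  destruct (is_null d (snd t)) eqn:N; [|ring].
  exfalso. apply E. now apply is_null_spec with d.
Qed.

Lemma grid_sum_cpoly d i M P : Forall (supported_on i M) P -> (i < d)%nat ->
  sumR (S M) (fun r => cpoly_eval d (grid_point i (S M) r) P) = INR (S M) * const_coef d P.
Proof.
intros HP Hi. induction HP as [|t P Ht HP IH].
- simpl. rewrite sumR_const. ring.
- cbn [cpoly_eval const_coef]. rewrite sumR_add, IH, grid_sum_cterm by auto. ring.
Qed.

(* The grid average of [peak ^ M] is at least its value [1] at the grid point [0], divided by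
   the number [M + 1] of grid points. *)
Lemma const_coef_peak_pow d i M : (i < d)%nat -> / INR (S M) <= const_coef d (peak_pow_cpoly i M).
Proof.
intros Hi.
assert (HM : 0 < INR (S M)) by (apply lt_0_INR; lia).
assert (H1 : 1 <= sumR (S M) (fun r => cpoly_eval d (grid_point i (S M) r) (peak_pow_cpoly i M))).
{ eapply Rle_trans; [|apply sumR_ge_head].
  - rewrite cpoly_eval_peak_pow by auto. unfold grid_point, peak. rewrite Nat.eqb_refl.
    replace (2 * PI * (INR 0 / INR (S M))) with 0 by (change (INR 0) with 0; unfold Rdiv; ring).
    rewrite cos_0. replace ((1 + 1) / 2) with 1 by field. rewrite pow1. lra.
  - intros r. rewrite cpoly_eval_peak_pow by auto. apply peak_pow_bounds. }
rewrite (grid_sum_cpoly d i M _ (supported_on_peak_pow i M) Hi) in H1.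
apply (Rmult_le_reg_l (INR (S M))); auto. rewrite Rinv_r; lra.
Qed.

Lemma const_coef_kernel d M k : (k <= d)%nat -> (/ INR (S M)) ^ k <= const_coef d (kernel M k).
Proof.
intros Hk. induction k; cbn [kernel pow].
- unfold cpoly_one; cbn [const_coef]. unfold cterm_const; cbn [fst snd].
  rewrite (proj2 (is_null_spec d _)) by reflexivity. lra.
- eapply Rle_trans;
    [|apply const_coef_mul; [apply nonneg_coefs_peak_pow | apply nonneg_coefs_kernel]].
  assert (0 <= / INR (S M)) by (apply Rlt_le, Rinv_0_lt_compat, lt_0_INR; lia).
  assert (0 <= (/ INR (S M)) ^ k) by (apply pow_le; auto).
  apply Rmult_le_compat; auto; [apply const_coef_peak_pow | apply IHk]; lia.
Qed.

Definition annihilates_relations (d : nat) (th : nat -> R) (n : nat -> Z) : Prop :=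
  forall h, is_rational (dotR d h th) -> dotZ d h n = 0%Z.

Lemma common_denominator (xs : list R) :
  exists D, (1 <= D)%nat /\ forall x, In x xs -> is_rational x -> exists z, INR D * x = IZR z.
Proof.
induction xs as [|x xs [D [HD IH]]]; [exists 1%nat; split; [lia | intros _ []]|].
destruct (classic (is_rational x)) as [[[a b] Hq]|Hx].
- exists (D * Pos.to_nat b)%nat. split; [lia|].
  intros y [<-|Hy] Hr.
  + exists (Z.of_nat D * a)%Z. rewrite Hq. unfold Q2R; cbn [Qnum Qden].
    rewrite mult_INR, mult_IZR, <- INR_IZR_INZ, <- positive_nat_Z, <- INR_IZR_INZ.
    field. apply not_0_INR. lia.
  + destruct (IH y Hy Hr) as [z Hz]. exists (Z.of_nat (Pos.to_nat b) * z)%Z.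
    rewrite mult_IZR, <- Hz, <- INR_IZR_INZ, mult_INR. ring.
- exists D. split; auto. intros y [<-|Hy] Hr; [contradiction | auto].
Qed.

Definition orbit_point (th : nat -> R) (n : nat -> Z) (tau : R) (D j : nat) : nat -> R :=
  fun l => INR (S j * D) * th l - tau * IZR (n l).

Lemma dotR_orbit_point d th n tau D j h :
  dotR d h (orbit_point th n tau D j) = INR (S j * D) * dotR d h th - tau * IZR (dotZ d h n).
Proof.
rewrite (dotR_ext d h h _ (fun l => INR (S j * D) * th l + (- tau) * IZR (n l))) by
  (auto; intros; unfold orbit_point; ring).
rewrite dotR_linear_r, dotR_IZR. ring.
Qed.

(* Along the orbit, a term with rational frequency [h.th] is constant (as [D h.th] is an integer
   and [h.n = 0]), while one with irrational frequency has bounded partial sums. *)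
Lemma orbit_sum_cterm d th n tau D t : annihilates_relations d th n -> (1 <= D)%nat -> 0 <= fst t ->
  (is_rational (dotR d (snd t) th) -> exists z, INR D * dotR d (snd t) th = IZR z) ->
  exists B, forall N,
    INR N * cterm_const d t - B <= sumR N (fun j => cterm_eval d (orbit_point th n tau D j) t).
Proof.
intros Hn HD Ht Hz. unfold cterm_eval. set (s := dotR d (snd t) th) in *.
assert (Hc : cterm_const d t <= fst t) by (unfold cterm_const; destruct is_null; lra).
destruct (classic (is_rational s)) as [Hr|Hr].
- destruct (Hz Hr) as [z Hzz]. exists 0. intros N.
  rewrite (sumR_ext N _ (fun _ => fst t)), sumR_const.
  + pose proof (pos_INR N). nra.
  + intros j _. rewrite dotR_orbit_point, (Hn _ Hr). fold s.
    replace (2 * PI * (INR (S j * D) * s - tau * IZR 0))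
      with (0 + 2 * PI * IZR (Z.of_nat (S j) * z)).
    * rewrite cos_add_2PI_IZR, cos_0. ring.
    * rewrite mult_IZR, <- INR_IZR_INZ, <- Hzz, mult_INR. ring.
- assert (Hc0 : cterm_const d t = 0).
  { unfold cterm_const. destruct is_null eqn:E; auto. exfalso. apply Hr.
    unfold s. rewrite dotR_null by now apply is_null_spec. apply is_rational_0. }
  set (g := 2 * PI * (INR D * s)).
  set (p := g - 2 * PI * tau * IZR (dotZ d (snd t) n)).
  assert (Hs : sin (g / 2) <> 0).
  { intros H0. replace (g / 2) with (PI * (INR D * s)) in H0 by (unfold g; field).
    apply sin_PI_mul_eq_0 in H0 as [k Hk]. apply Hr.
    exists (Qmake k (Pos.of_nat D)). unfold Q2R; cbn [Qnum Qden].
    rewrite <- positive_nat_Z, <- INR_IZR_INZ, Nat2Pos.id, <- Hk by lia.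
    field. apply not_0_INR. lia. }
  exists (fst t / Rabs (sin (g / 2))). intros N.
  rewrite (sumR_ext N _ (fun j => fst t * cos (INR j * g + p))), sumR_scal.
  + pose proof (sum_cos_bound N g p Hs) as Hb.
    set (S := sumR N _) in *. pose proof (Rle_abs (- S)). rewrite Rabs_Ropp in *.
    assert (0 < Rabs (sin (g / 2))) by (apply Rabs_pos_lt; auto).
    rewrite Hc0, Rmult_0_r. unfold Rdiv in *. rewrite Rmult_1_l in Hb. nra.
  + intros j _. rewrite dotR_orbit_point. fold s. unfold p, g.
    rewrite mult_INR, S_INR. f_equal. f_equal. ring.
Qed.

Lemma orbit_sum_cpoly d th n tau D (P : cpoly) : annihilates_relations d th n -> (1 <= D)%nat ->
  nonneg_coefs P ->
  (forall t, In t P -> is_rational (dotR d (snd t) th) ->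
     exists z, INR D * dotR d (snd t) th = IZR z) ->
  exists B, forall N,
    INR N * const_coef d P - B <= sumR N (fun j => cpoly_eval d (orbit_point th n tau D j) P).
Proof.
intros Hn HD HP Hz. induction HP as [|t P Ht HP IH].
- exists 0. intros N. simpl. rewrite sumR_const. lra.
- destruct IH as [B1 HB1]; [intros; apply Hz; simpl; auto|].
  destruct (orbit_sum_cterm d th n tau D t Hn HD Ht (Hz t (or_introl eq_refl))) as [B2 HB2].
  exists (B1 + B2). intros N. cbn [cpoly_eval const_coef]. rewrite sumR_add.
  specialize (HB1 N). specialize (HB2 N). nra.
Qed.

Lemma peak_le_far v e : 0 < e <= 1/2 -> (forall m : Z, e <= Rabs (v - IZR m)) ->
  peak v <= cos (PI * e) ^ 2.
Proof.
intros He Hm. set (m0 := Int_part v). set (f := v - IZR m0).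
destruct (base_Int_part v) as [B1 B2]. fold m0 in B1, B2.
pose proof (Hm m0) as H1. fold f in H1. rewrite Rabs_right in H1 by (unfold f; lra).
pose proof (Hm (m0 + 1)%Z) as H2. rewrite plus_IZR in H2.
replace (v - (IZR m0 + 1)) with (f - 1) in H2 by (unfold f; ring).
rewrite Rabs_left in H2 by (unfold f; lra).
unfold peak. replace (2 * PI * v) with (2 * (PI * f) + 2 * PI * IZR m0) by (unfold f; ring).
rewrite cos_add_2PI_IZR, cos_2a_cos.
pose proof PI_RGT_0.
assert (0 <= cos (PI * e)) by (apply cos_ge_0; nra).
destruct (Rle_dec f (1/2)).
- assert (0 <= cos (PI * f)) by (apply cos_ge_0; nra).
  assert (cos (PI * f) <= cos (PI * e)) by (apply cos_decr_1; nra).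
  simpl. nra.
- replace (PI * f) with (PI - PI * (1 - f)) by ring. rewrite Rtrigo_facts.cos_pi_minus.
  assert (0 <= cos (PI * (1 - f))) by (apply cos_ge_0; nra).
  assert (cos (PI * (1 - f)) <= cos (PI * e)) by (apply cos_decr_1; nra).
  simpl. nra.
Qed.

Lemma cos_PI_mul_sqr_lt_1 e : 0 < e <= 1/2 -> cos (PI * e) ^ 2 < 1.
Proof.
intros He. pose proof PI_RGT_0.
assert (0 < sin (PI * e)) by (apply sin_gt_0; nra).
pose proof (sin2_cos2 (PI * e)). unfold Rsqr in *. simpl. nra.
Qed.

Lemma eventually_mul_pow_le_1 s : 0 <= s < 1 ->
  exists M0, forall M, (M0 <= M)%nat -> INR (S M) * s ^ M <= 1.
Proof.
intros Hs. set (q := sqrt s). set (delta := 1 - q).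
assert (Hq : 0 <= q < 1) by (split; [apply sqrt_pos | rewrite <- sqrt_1; apply sqrt_lt_1; lra]).
assert (Hqq : q * q = s) by (apply sqrt_sqrt; lra).
assert (Hd : 0 < delta) by (unfold delta; lra).
destruct (INR_archimed (delta ^ 2) 1) as [M0 HM0]; [simpl; nra|].
exists M0. intros M HM.
assert (HMd : 1 <= INR M * delta ^ 2).
{ apply Rle_trans with (INR M0 * delta ^ 2); [lra|].
  apply Rmult_le_compat_r; [apply pow_le; lra | now apply le_INR]. }
(* [q (1 + delta) <= 1], so Bernoulli's inequality gives [q ^ M (1 + M delta) <= 1]. *)
assert (HqM : q ^ M * (1 + INR M * delta) <= 1).
{ apply Rle_trans with (q ^ M * (1 + delta) ^ M).
  - apply Rmult_le_compat_l; [apply pow_le; lra | apply poly; lra].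
  - rewrite <- Rpow_mult_distr. apply pow_le_1.
    pose proof (pow2_ge_0 (1 - q)). unfold delta in *. simpl in *. nra. }
rewrite <- Hqq, Rpow_mult_distr, S_INR.
assert (0 <= q ^ M) by (apply pow_le; lra). pose proof (pos_INR M).
set (x := q ^ M) in *. set (y := 1 + INR M * delta) in *.
assert (Hy : INR M + 1 <= y ^ 2) by (unfold y; simpl in *; nra).
assert (0 <= x * y) by (apply Rmult_le_pos; unfold y; nra).
apply Rle_trans with ((x * y) * (x * y)); [|nra].
replace ((x * y) * (x * y)) with (y ^ 2 * (x * x)) by ring.
apply Rmult_le_compat_r; [nra | exact Hy].
Qed.

Lemma eventually_pow_mul_pow_le_1 k : forall s, 0 <= s < 1 ->
  exists M0, forall M, (M0 <= M)%nat -> INR (S M) ^ k * s ^ M <= 1.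
Proof.
induction k; intros s Hs.
- exists O. intros M _. rewrite pow_O, Rmult_1_l. apply pow_le_1. lra.
- set (r := sqrt s).
  assert (Hr : 0 <= r < 1) by (split; [apply sqrt_pos | rewrite <- sqrt_1; apply sqrt_lt_1; lra]).
  assert (Hrr : r * r = s) by (apply sqrt_sqrt; lra).
  destruct (IHk r Hr) as [M1 H1]. destruct (eventually_mul_pow_le_1 r Hr) as [M2 H2].
  exists (Nat.max M1 M2). intros M HM.
  specialize (H1 M ltac:(lia)). specialize (H2 M ltac:(lia)).
  replace (INR (S M) ^ S k * s ^ M) with ((INR (S M) ^ k * r ^ M) * (INR (S M) * r ^ M))
    by (rewrite <- Hrr, Rpow_mult_distr; simpl; ring).
  assert (0 <= r ^ M) by (apply pow_le; lra).
  assert (0 <= INR (S M) ^ k) by (apply pow_le, pos_INR). pose proof (pos_INR (S M)).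
  assert (0 <= INR (S M) ^ k * r ^ M) by (apply Rmult_le_pos; lra).
  assert (0 <= INR (S M) * r ^ M) by (apply Rmult_le_pos; lra).
  nra.
Qed.

Lemma exists_pow_lt_inv_pow k rho : 0 <= rho < 1 -> exists M, rho ^ M < (/ INR (S M)) ^ k.
Proof.
intros Hrho. set (rho' := (1 + rho) / 2).
destruct (eventually_pow_mul_pow_le_1 k rho' ltac:(unfold rho'; lra)) as [M0 HM0].
exists (S M0). specialize (HM0 (S M0) ltac:(lia)).
assert (HQ : 0 < INR (S (S M0)) ^ k) by (apply pow_lt, lt_0_INR; lia).
assert (Hlt : rho ^ S M0 < rho' ^ S M0).
{ assert (rho ^ M0 <= rho' ^ M0) by (apply pow_incr; unfold rho'; lra).
  assert (0 < rho' ^ M0) by (apply pow_lt; unfold rho'; lra).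
  pose proof (pow_le rho M0 ltac:(lra)). simpl. unfold rho' in *. nra. }
rewrite pow_inv. apply (Rmult_lt_reg_l (INR (S (S M0)) ^ k)); auto.
rewrite Rinv_r by lra. nra.
Qed.

(* If the orbit stayed [eps]-far from [Z^d],
   the nonnegative kernel would be at most [rho ^ M] all along it, while its averages along the
   orbit tend to at least its constant term, which exceeds [rho ^ M] for a suitable [M]. *)
Theorem kronecker_orbit d th n : annihilates_relations d th n ->
  forall tau eps, eps > 0 -> exists N : nat, (1 <= N)%nat /\
    forall i, (i < d)%nat -> exists m : Z, Rabs (INR N * th i - IZR (n i) * tau - IZR m) < eps.
Proof.
intros Hn tau eps He. apply NNPP. intros Hno.
assert (Hfar : forall N, (1 <= N)%nat -> exists i, (i < d)%nat /\
          forall m : Z, eps <= Rabs (INR N * th i - IZR (n i) * tau - IZR m)).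
{ intros N HN. apply NNPP. intros Hc. apply Hno. exists N. split; auto.
  intros i Hi. apply NNPP. intros Hm. apply Hc. exists i. split; auto.
  intros m. apply Rnot_lt_le. intros Hlt. apply Hm. now exists m. }
set (e := Rmin eps (1/2)).
assert (He1 : 0 < e <= 1/2) by (unfold e; split; [apply Rmin_glb_lt; lra | apply Rmin_r]).
set (rho := cos (PI * e) ^ 2).
assert (Hrho : 0 <= rho < 1) by (split; [apply pow2_ge_0 | now apply cos_PI_mul_sqr_lt_1]).
destruct (exists_pow_lt_inv_pow d rho Hrho) as [M HM].
set (K := kernel M d).
assert (HK : rho ^ M < const_coef d K)
  by (eapply Rlt_le_trans; [exact HM | apply const_coef_kernel; lia]).
destruct (common_denominator (map (fun t => dotR d (snd t) th) K)) as [D [HD HDK]].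
destruct (orbit_sum_cpoly d th n tau D K Hn HD (nonneg_coefs_kernel M d)) as [B HB].
{ intros t Ht. apply HDK. now apply (in_map (fun t => dotR d (snd t) th)). }
assert (Hup : forall N,
          sumR N (fun j => cpoly_eval d (orbit_point th n tau D j) K) <= INR N * rho ^ M).
{ intros N. rewrite <- sumR_const. apply sumR_le. intros j _.
  unfold K. rewrite cpoly_eval_kernel by lia.
  destruct (Hfar (S j * D)%nat ltac:(lia)) as [i [Hi Hm]].
  apply (peak_prod_le M d _ i rho Hi); [apply pow2_ge_0|].
  apply peak_le_far; auto. intros m. apply Rle_trans with eps; [apply Rmin_l|].
  unfold orbit_point. rewrite (Rmult_comm tau). apply Hm. }
destruct (INR_archimed (const_coef d K - rho ^ M) B ltac:(lra)) as [N HN].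
specialize (HB N). specialize (Hup N). nra.
Qed.

Module RationalAnnihilator.
Import ssreflect ssrfun ssrbool eqtype ssrnat seq fintype bigop.
Import ssralg ssrnum ssrint rat matrix mxalgebra Rstruct ssrZ zify.
Import GRing.Theory Num.Theory.
Local Open Scope ring_scope.
Local Set Implicit Arguments.
Local Unset Strict Implicit.

Section SubspaceAnnihilator.
Variable d : nat.
Variable P : 'rV[rat]_d -> Prop.
Hypothesis P0 : P 0.
Hypothesis PD : forall a b, P a -> P b -> P (a + b).
Hypothesis PZ : forall (k : rat) a, P a -> P (k *: a).

Definition rows_span_in {k} (A : 'M[rat]_(k, d)) := forall w : 'rV_k, P (w *m A).

Lemma rows_span_in_col_mx k (A : 'M[rat]_(k, d)) h :
  rows_span_in A -> P h -> rows_span_in (col_mx A h).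
Proof.
move=> sA Ph w; rewrite -[w]hsubmxK mul_row_col.
apply: PD; first exact: sA.
by rewrite [rsubmx w]mx11_scalar mul_scalar_mx; apply: PZ.
Qed.

Lemma exists_spanning_matrix :
  exists k (A : 'M[rat]_(k, d)), rows_span_in A /\ forall h, P h -> (h <= A)%MS.
Proof.
have base : rows_span_in (0 : 'M[rat]_(0, d)) by move=> w; rewrite mulmx0.
suff /(_ d 0%N 0 base (leq_subr _ _)) : forall m k (A : 'M[rat]_(k, d)),
    rows_span_in A -> (d - \rank A <= m)%N ->
    exists k' (A' : 'M[rat]_(k', d)), rows_span_in A' /\ forall h, P h -> (h <= A')%MS by [].
elim=> [|m IH] k A sA hm.
  exists k, A; split=> // h _; apply: submx_full.
  by rewrite /row_full eqn_leq rank_leq_col -subn_eq0 -leqn0.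
case: (classic (forall h, P h -> (h <= A)%MS)) => [all|]; first by exists k, A.
move=> /not_all_ex_not [h hA]; have [Ph /negP nh] := imply_to_and _ _ hA.
have : (A < col_mx A h)%MS.
  have := submx_refl (col_mx A h); rewrite col_mx_sub => /andP [sAB sHB].
  rewrite ltmxE sAB /=; apply/negP => sBA.
  by rewrite (submx_trans sHB sBA) in nh.
rewrite ltmxErank => /andP [_ lt].
apply: (IH _ (col_mx A h)); first exact: rows_span_in_col_mx.
have := rank_leq_col (col_mx A h); lia.
Qed.

Lemma exists_separating_functional (c : 'rV[rat]_d) : ~ P c ->
  exists v : 'I_d -> rat,
    (forall h, P h -> \sum_i h ord0 i * v i = 0) /\ \sum_i c ord0 i * v i != 0.
Proof.
move=> nPc.
have [k [A [sA allA]]] := exists_spanning_matrix.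
have : ~~ (c <= A)%MS by apply/negP => /submxP [w cE]; apply: nPc; rewrite cE; exact: sA.
rewrite submxE => nz.
have [j jnz] : exists j, (c *m cokermx A) ord0 j != 0.
  apply: NNPP => nex; move/negP: nz; apply; apply/eqP/matrixP => i j.
  rewrite (ord1 i) [RHS]mxE; apply: NNPP => hn; apply: nex; exists j.
  by apply/eqP.
exists (fun i => cokermx A i j); split; last by move: jnz; rewrite mxE.
move=> h Ph; have /submxP [w ->] := allA h Ph.
have : ((w *m A) *m cokermx A) ord0 j = 0 by rewrite -mulmxA mulmx_coker mulmx0 mxE.
by rewrite mxE.
Qed.

End SubspaceAnnihilator.

Lemma clear_denominators n (v : 'I_n -> rat) :
  exists (k : int) (w : 'I_n -> int), k != 0 /\ forall i, (w i)%:~R = k%:~R * v i.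
Proof.
exists (\prod_i denq (v i)), (fun i => numq (v i) * \prod_(j | j != i) denq (v j)); split.
  by apply/prodf_neq0 => i _; exact: denq_neq0.
move=> i; rewrite [in RHS](bigD1 i) //= !intrM numqE.
by rewrite [RHS]mulrC mulrA.
Qed.

Lemma IZR_intr (z : Z) : IZR z = (int_of_Z z)%:~R :> R.
Proof.
have pos p : IZR (Z.pos p) = (int_of_Z (Z.pos p))%:~R :> R.
  by rewrite /= -positive_nat_Z -INR_IZR_INZ INRE pmulrn.
case: z => [|p|p]; [by [] | exact: pos | ].
have -> : int_of_Z (Z.neg p) = - int_of_Z (Z.pos p) by rewrite /= NegzE; lia.
by rewrite mulrNz -pos -Pos2Z.opp_pos opp_IZR.
Qed.

Lemma ratr_Q2R (r : rat) : exists q : Q, ratr r = Q2R q.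
Proof.
have [m dm] := denqP r.
exists (Qmake (Z_of_int (numq r)) (Pos.of_succ_nat m)).
rewrite /Q2R /= /ratr.
have -> : Z.pos (Pos.of_succ_nat m) = Z_of_int (denq r) by rewrite dm /= Zpos_P_of_succ_nat; lia.
by rewrite !IZR_intr !Z_of_intK.
Qed.

Lemma dotR_big d (h : nat -> Z) (x : nat -> R) : dotR d h x = \sum_(i < d) IZR (h i) * x i.
Proof. by elim: d => [|d IH]; rewrite ?big_ord0 // big_ord_recr /= IH. Qed.

Lemma dotZ_big d (h n : nat -> Z) : dotZ d h n = \sum_(i < d) h i * n i.
Proof. by elim: d => [|d IH]; rewrite ?big_ord0 // big_ord_recr /= IH. Qed.

(* The integer relations [h.th in Q] span a rational subspace; a rational functional vanishing
   on it but not at [c], scaled to integer values, is the required [n]. *)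
Lemma exists_annihilator_separating d (th : nat -> R) (c : nat -> Z) :
  ~ is_rational (dotR d c th) ->
  exists n : nat -> Z, annihilates_relations d th n /\ dotZ d c n <> Z0.
Proof.
case: d => [|d] nc; first by case: nc; exact: is_rational_0.
pose P (r : 'rV[rat]_d.+1) := is_rational (\sum_(i < d.+1) ratr (r ord0 i) * th i).
have P0 : P 0.
  rewrite /P; under eq_bigr => i _ do rewrite mxE rmorph0 mul0r.
  rewrite big1_eq; exact: is_rational_0.
have PD a b : P a -> P b -> P (a + b).
  rewrite /P => Pa Pb; under eq_bigr => i _ do rewrite mxE rmorphD mulrDl.
  rewrite big_split; exact: is_rational_plus.
have PZ k a : P a -> P (k *: a).
  rewrite /P => Pa; under eq_bigr => i _ do rewrite mxE rmorphM -mulrA.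
  rewrite -mulr_sumr; apply: is_rational_mult => //.
  have [q qe] := ratr_Q2R k; exists q; exact: qe.
pose row_of (h : nat -> Z) : 'rV[rat]_d.+1 := \row_i (int_of_Z (h i))%:~R.
have Prow (h : nat -> Z) :P (row_of h) <-> is_rational (dotR d.+1 h th).
  rewrite /P dotR_big; under eq_bigr => i _ do rewrite mxE ratr_int -IZR_intr; by [].
have [v [vker vc]] := exists_separating_functional P0 PD PZ (fun H => nc (proj1 (Prow c) H)).
have [k [w [k0 wE]]] := clear_denominators v.
pose n i := if (i < d.+1)%N then Z_of_int (w (inord i)) else Z0.
have dotZ_n (h : nat -> Z) :dotZ d.+1 h n = Z_of_int (\sum_(i < d.+1) int_of_Z (h i) * w i).
  rewrite dotZ_big rmorph_sum; apply: eq_bigr => i _.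
  by rewrite /n ltn_ord inord_val rmorphM /= int_of_ZK.
have sum_w (h : nat -> Z) : (\sum_(i < d.+1) int_of_Z (h i) * w i)%:~R
    = k%:~R * \sum_i row_of h ord0 i * v i :> rat.
  rewrite mulrz_sumr mulr_sumr; apply: eq_bigr => i _.
  by rewrite intrM wE mxE mulrCA.
exists n; split.
  move=> h /Prow Ph; rewrite dotZ_n.
  suff -> : \sum_(i < d.+1) int_of_Z (h i) * w i = 0 by [].
  by apply/eqP; rewrite -(intr_eq0 rat) sum_w (vker _ Ph) mulr0.
rewrite dotZ_n => /(congr1 int_of_Z); rewrite Z_of_intK => /(congr1 (fun z : int => z%:~R : rat)).
by rewrite sum_w mulr0z => /eqP; rewrite mulf_eq0 (negbTE vc) orbF intr_eq0 (negbTE k0).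
Qed.

End RationalAnnihilator.

Lemma annihilates_relations_zero d th : annihilates_relations d th (fun _ => 0%Z).
Proof. intros h _. induction d; simpl; [reflexivity | rewrite IHd; ring]. Qed.

Lemma annihilates_relations_lin d th u v a b :
  annihilates_relations d th u -> annihilates_relations d th v ->
  annihilates_relations d th (fun l => (a * u l + b * v l)%Z).
Proof. intros Hu Hv h Hh. rewrite dotZ_linear_r, Hu, Hv by auto. ring. Qed.

Lemma Z_add_mul_neq0 x y lam : (Z.abs x < lam)%Z -> (x <> 0 \/ y <> 0)%Z -> (x + lam * y <> 0)%Z.
Proof.
intros Hx Hxy E. destruct (Z.eq_dec y 0) as [->|Hy]; [lia|].
assert (Z.abs (lam * y) >= lam)%Z by (rewrite Z.abs_mul; nia). lia.
Qed.

(* Finitely many irrational relations are avoided at once: with [n] avoiding [cs] and [m]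
   separating [c0], [n + lam m] avoids all of them once [lam] exceeds every [|c.n|]. *)
Lemma exists_annihilator_avoiding d th (cs : list (nat -> Z)) :
  (forall c, In c cs -> ~ is_rational (dotR d c th)) ->
  exists n, annihilates_relations d th n /\ forall c, In c cs -> dotZ d c n <> 0%Z.
Proof.
induction cs as [|c0 cs IH]; intros Hcs.
- exists (fun _ => 0%Z). split; [apply annihilates_relations_zero | intros c []].
- destruct IH as [u [Hu Hcu]]; [intros c Hc; apply Hcs; now right|].
  destruct (@RationalAnnihilator.exists_annihilator_separating d th c0) as [m [Hm Hc0m]];
    [apply Hcs; now left|].
  set (sizes := map (fun c => Z.abs_nat (dotZ d c u)) (c0 :: cs)).
  set (lam := (1 + Z.of_nat (list_max sizes))%Z).
  exists (fun l => (1 * u l + lam * m l)%Z). split; [now apply annihilates_relations_lin|].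
  intros c Hc. rewrite dotZ_linear_r, Z.mul_1_l. apply Z_add_mul_neq0.
  + assert (Hle : (Z.abs_nat (dotZ d c u) <= list_max sizes)%nat).
    { pose proof (proj1 (list_max_le sizes _) (le_n _)) as Hall. rewrite Forall_forall in Hall.
      apply Hall. now apply (in_map (fun c => Z.abs_nat (dotZ d c u))). }
    unfold lam. lia.
  + destruct Hc as [<-|Hc]; [now right | left; now apply Hcu].
Qed.

Definition pairwise_lin_indep (d : nat) (th : nat -> R) : Prop :=
  forall i j, (i < d)%nat -> (j < d)%nat -> i <> j -> Q_lin_indep3 1 (th i) (th j).

Lemma irrational_lin_comb x y a b : Q_lin_indep3 1 x y -> (a <> 0 \/ b <> 0)%Z ->
  ~ is_rational (IZR a * x + IZR b * y).
Proof.
intros Hind Hab [q Hq].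
destruct (Hind (- q)%Q (inject_Z a) (inject_Z b)) as [_ [Ha Hb]].
- rewrite Q2R_opp. unfold Q2R at 2 3. simpl. rewrite <- Hq. field.
- unfold Qeq in Ha, Hb. simpl in Ha, Hb. lia.
Qed.

Lemma irrational_pair_vec d th i j a b : pairwise_lin_indep d th ->
  (i < d)%nat -> (j < d)%nat -> i <> j -> (a <> 0 \/ b <> 0)%Z ->
  ~ is_rational (dotR d (pair_vec i j a b) th).
Proof.
intros Hind Hi Hj Hij Hab. rewrite dotR_pair_vec by auto.
apply irrational_lin_comb; auto.
Qed.

Lemma irrational_unit_vec d th i : pairwise_lin_indep d th -> (2 <= d)%nat -> (i < d)%nat ->
  ~ is_rational (dotR d (unit_vec i) th).
Proof.
intros Hind Hd Hi. set (j := if Nat.eqb i 0 then 1%nat else 0%nat).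
assert (Hj : (j < d)%nat /\ i <> j)
  by (unfold j; destruct (Nat.eqb_spec i 0); lia).
rewrite dotR_unit_vec by auto.
replace (th i) with (dotR d (pair_vec i j 1 0) th) by (rewrite dotR_pair_vec by lia; simpl; ring).
apply irrational_pair_vec; auto; lia.
Qed.

Lemma exists_annihilator_injective d th : pairwise_lin_indep d th -> (2 <= d)%nat ->
  exists u, annihilates_relations d th u /\ (forall i, (i < d)%nat -> u i <> 0%Z) /\
    (forall i j, (i < d)%nat -> (j < d)%nat -> i <> j -> u i <> u j).
Proof.
intros Hind Hd.
set (diffs := flat_map (fun i => map (fun j => pair_vec i j 1 (-1))
                (filter (fun j => negb (Nat.eqb i j)) (seq 0 d))) (seq 0 d)).
destruct (exists_annihilator_avoiding d th (map unit_vec (seq 0 d) ++ diffs)) as [u [Hu Hcu]].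
{ intros c Hc. apply in_app_iff in Hc as [Hc|Hc].
  - apply in_map_iff in Hc as [i [<- Hi]]. apply in_seq in Hi.
    apply irrational_unit_vec; auto; lia.
  - apply in_flat_map in Hc as [i [Hi Hc]]. apply in_map_iff in Hc as [j [<- Hj]].
    apply filter_In in Hj as [Hj Hij]. apply in_seq in Hi, Hj.
    apply negb_true_iff, Nat.eqb_neq in Hij.
    apply irrational_pair_vec; auto; lia. }
exists u. split; [exact Hu | split].
- intros i Hi. rewrite <- (dotZ_unit_vec d i u Hi). apply Hcu, in_app_iff. left.
  apply in_map, in_seq. lia.
- intros i j Hi Hj Hij E. apply (Hcu (pair_vec i j 1 (-1))).
  + apply in_app_iff. right. apply in_flat_map. exists i. split; [apply in_seq; lia|].
    apply (in_map (fun j => pair_vec i j 1 (-1))). apply filter_In. split; [apply in_seq; lia|].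
    now apply negb_true_iff, Nat.eqb_neq.
  + rewrite dotZ_pair_vec by auto. lia.
Qed.

Lemma exists_annihilator_cross d th (u : nat -> Z) i1 : pairwise_lin_indep d th ->
  (i1 < d)%nat -> u i1 <> 0%Z ->
  exists v, annihilates_relations d th v /\
    forall i, (i < d)%nat -> i <> i1 -> (u i1 * v i - u i * v i1 <> 0)%Z.
Proof.
intros Hind Hi1 Hu1.
set (others := filter (fun i => negb (Nat.eqb i i1)) (seq 0 d)).
destruct (exists_annihilator_avoiding d th (map (fun i => pair_vec i i1 (u i1) (- u i)) others))
  as [v [Hv Hcv]].
{ intros c Hc. apply in_map_iff in Hc as [i [<- Hi]].
  apply filter_In in Hi as [Hi Hii]. apply in_seq in Hi. apply negb_true_iff, Nat.eqb_neq in Hii.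
  apply irrational_pair_vec; auto; lia. }
exists v. split; [exact Hv|]. intros i Hi Hii.
replace (u i1 * v i - u i * v i1)%Z with (dotZ d (pair_vec i i1 (u i1) (- u i)) v)
  by (rewrite dotZ_pair_vec by auto; ring).
apply Hcv, (in_map (fun i => pair_vec i i1 (u i1) (- u i))), filter_In.
split; [apply in_seq; lia | now apply negb_true_iff, Nat.eqb_neq].
Qed.

Lemma exists_bound d (f : nat -> Z) : exists B, forall i, (i < d)%nat -> (f i <= B)%Z.
Proof.
induction d as [|d [B HB]]; [exists 0%Z; intros; lia|].
exists (Z.max B (f d)). intros i Hi.
destruct (Nat.eq_dec i d) as [->|]; [lia | specialize (HB i ltac:(lia)); lia].
Qed.

Lemma Z_mul_add_neq0 x y N : x <> 0%Z -> (Z.abs y < N)%Z -> (N * x + y <> 0)%Z.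
Proof. intros Hx Hy E. assert (Z.abs (N * x) >= N)%Z by (rewrite Z.abs_mul; nia). lia. Qed.

Lemma exists_admissible_annihilator d th i1 : pairwise_lin_indep d th -> (2 <= d)%nat ->
  (i1 < d)%nat ->
  exists n : nat -> Z, annihilates_relations d th n /\
    (forall i j, (i < d)%nat -> (j < d)%nat -> i <> j -> n i <> n j) /\
    (forall i, (i < d)%nat -> n i <> 0%Z) /\
    (forall i, (i < d)%nat -> i <> i1 -> ~ Z.divide (n i1) (n i)).
Proof.
intros Hind Hd Hi1.
destruct (exists_annihilator_injective d th Hind Hd) as [u [Hu [Hu0 Hinj]]].
destruct (exists_annihilator_cross d th u i1 Hind Hi1 (Hu0 i1 Hi1)) as [v [Hv Hcross]].
set (K := fun i => (u i1 * v i - u i * v i1)%Z).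
destruct (exists_bound d (fun i => Z.abs (v i) + Z.abs (K i))%Z) as [B HB].
assert (HB0 : (0 <= B)%Z) by (pose proof (HB i1 Hi1); lia).
set (N := (1 + 2 * B)%Z).
exists (fun l => (N * u l + 1 * v l)%Z). split; [now apply annihilates_relations_lin|].
split; [|split].
- intros i j Hi Hj Hij E. apply (Z_mul_add_neq0 (u i - u j) (v i - v j) N).
  + specialize (Hinj i j Hi Hj Hij). lia.
  + pose proof (HB i Hi). pose proof (HB j Hj). unfold N. lia.
  + lia.
- intros i Hi. rewrite Z.mul_1_l. apply Z_mul_add_neq0; auto.
  pose proof (HB i Hi). unfold N. lia.
- intros i Hi Hii Hdiv.
  assert (Hn1 : (Z.abs (K i) < Z.abs (N * u i1 + 1 * v i1))%Z).
  { pose proof (HB i Hi). pose proof (HB i1 Hi1). pose proof (Hu0 i1 Hi1).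
    assert (Z.abs (N * u i1) >= N)%Z by (rewrite Z.abs_mul; unfold N; nia).
    unfold N in *. lia. }
  assert (HK : Z.divide (N * u i1 + 1 * v i1) (K i)).
  { replace (K i) with (u i1 * (N * u i + 1 * v i) - u i * (N * u i1 + 1 * v i1))%Z
      by (unfold K; ring).
    apply Z.divide_sub_r; [now apply Z.divide_mul_r | apply Z.divide_mul_r, Z.divide_refl]. }
  apply Zdivide_bounds in HK; [lia | now apply Hcross].
Qed.

Theorem lemma3p2
  (M k d : nat) (a : nat -> nat -> R) (theta : nat -> nat -> R) (p : nat)
  (hM : level_ok M) (hk : (0 < k)%nat) (hd : (2 <= d)%nat)
  (hnorm : forall i : nat, (i < d)%nat -> a i 1%nat = 1)
  (htheta : satake_angles M k d a theta)
  (hp : nat_prime p) (hpM : ~ Nat.divide p M)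
  (hind : forall i j : nat, (i < d)%nat -> (j < d)%nat -> i <> j ->
            Q_lin_indep3 1 (theta i p) (theta j p)) :
  forall i1 : nat, (i1 < d)%nat ->
  exists n : nat -> Z,
    (forall i j : nat, (i < d)%nat -> (j < d)%nat -> i <> j -> n i <> n j) /\
    (forall i : nat, (i < d)%nat -> n i <> 0%Z) /\
    (forall i : nat, (i < d)%nat -> i <> i1 -> ~ Z.divide (n i1) (n i)) /\
    (forall t eps : R, eps > 0 ->
       exists n0 : nat, (1 <= n0)%nat /\
         forall i : nat, (i < d)%nat ->
           exists m : Z, Rabs (INR n0 * theta i p - IZR (n i) * t - IZR m) < eps).
Proof.
intros i1 Hi1.
destruct (exists_admissible_annihilator d (fun l => theta l p) i1 hind hd Hi1)
  as [n [Hn [Hinj [Hnz Hndiv]]]].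
exists n. split; [exact Hinj | split; [exact Hnz | split; [exact Hndiv|]]].
intros t eps He. exact (kronecker_orbit d (fun l => theta l p) n Hn t eps He).
Qed.
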